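(* Let $\mathcal{C}=\mathsf{CSS}(A,B)$ be a qudit CSS code on $n$ qudits with distance at least $3$, and $H_A$ a parity-check matrix for $A$. Then any permutation automorphism $\tau$ of $\mathcal{C}$ such that $H_AP_\tau=H_A$, where $P_\tau$ is the permutation matrix of $\tau$, acts as a logical identity on $\mathcal{C}$.
   Context: Let $q$ be a prime power. For classical codes $A,B\subseteq\mathbb{F}_q^n$ with full-row-rank parity-check matrices $H_A,H_B$ satisfying $H_AH_B^T=0$, $\mathsf{CSS}(A,B)$ is the qudit stabilizer code with $X$-type stabilizers $X^v$ ($v$ in the row space of $H_A$) and $Z$-type stabilizers $Z^w$ ($w$ in the row space of $H_B$). A permutation $\tau\in S_n$ is a permutation automorphism of a classical code with parity-check matrix $H$ (of $r$ rows) if $UH=HP_\tau$ for some $U\in\mathrm{GL}_r(\mathbb{F}_q)$; it is a permutation automorphism of $\mathsf{CSS}(A,B)$ if it is one for both $A$ and $B$. Permuting physical qudits by $\tau$ is then an operator on the code; a logical identity acts as the identity on the codespace. *)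

From HB Require Import structures.
From mathcomp Require Import all_boot all_order all_algebra all_fingroup all_field.
Set Implicit Arguments. Unset Strict Implicit. Unset Printing Implicit Defensive.
Import GRing.Theory.
Local Open Scope ring_scope.

Section QuditCSS.
Variables (F : finFieldType) (n : nat).

(* States of n qudits: amplitude functions on the computational basis |x>, x in F^n. *)
Definition state := {ffun 'rV[F]_n -> algC}.

Definition nontrivial_additive_char (chi : F -> algC) :=
  (forall a b, chi (a + b) = chi a * chi b) /\ exists a, chi a != 1.

(* Generalized Pauli operators: X^v |x> = |x + v>,  Z^w |x> = chi(w.x) |x>. *)
Definition Xop (v : 'rV[F]_n) (psi : state) : state := [ffun x => psi (x - v)].
Definition Zop (chi : F -> algC) (w : 'rV[F]_n) (psi : state) : state :=
  [ffun x => chi ((w *m x^T) 0 0) * psi x].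

Definition in_css_codespace (chi : F -> algC) rA rB
    (HA : 'M[F]_(rA, n)) (HB : 'M[F]_(rB, n)) (psi : state) :=
  (forall v : 'rV[F]_n, (v <= HA)%MS -> Xop v psi = psi) /\
  (forall w : 'rV[F]_n, (w <= HB)%MS -> Zop chi w psi = psi).

Definition pauli_weight (a b : 'rV[F]_n) : nat :=
  #|[set i : 'I_n | (a 0 i != 0) || (b 0 i != 0)]|.

(* Distance >= d: every Pauli X^a Z^b commuting with all stabilizers
   (HB a^T = 0, HA b^T = 0) and not itself a stabilizer (up to phase)
   has weight >= d. *)
Definition css_distance_ge rA rB (HA : 'M[F]_(rA, n)) (HB : 'M[F]_(rB, n)) (d : nat) :=
  forall a b : 'rV[F]_n,
    HB *m a^T = 0 -> HA *m b^T = 0 ->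
    ~ ((a <= HA)%MS /\ (b <= HB)%MS) ->
    (d <= pauli_weight a b)%N.

Definition is_perm_aut r (H : 'M[F]_(r, n)) (tau : 'S_n) :=
  exists U : 'M[F]_r, U \in unitmx /\ U *m H = H *m perm_mx tau.

(* Permuting physical qudits by tau: qudit i is moved to position tau i,
   i.e. |x> |-> |y> with y_(tau i) = x_i. *)
Definition qudit_perm (tau : 'S_n) (psi : state) : state :=
  [ffun y : 'rV[F]_n => psi (\row_i y 0 (tau i))].

End QuditCSS.

(* The X-type condition [H_A P_tau = H_A] says that columns [i] and [tau i] of
   [H_A] agree, so the weight-two Z-type Pauli [Z^(e_(tau i) - e_i)] commutes with
   every X-stabilizer; as the distance is at least 3 it must be a Z-stabilizer.
   Hence every [y] in [ker H_B] satisfies [y_(tau i) = y_i], i.e. is fixed by the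
   qudit permutation. Codewords are supported on [ker H_B] (the Z-stabilizers
   kill every other basis state), and [ker H_B] is stable under [tau] because
   [tau] is an automorphism of [B]; so permuting the qudits fixes every codeword. *)
From HB Require Import structures.
From mathcomp Require Import all_boot all_order all_algebra all_fingroup all_field.
Import GRing.Theory.
Local Open Scope ring_scope.

Section CSSPermutation.

Set Implicit Arguments.
Unset Strict Implicit.

Variables (F : finFieldType) (n : nat).
Implicit Types (y b : 'rV[F]_n) (tau : 'S_n).

Lemma Zfixed_state_eq0 rB (HB : 'M[F]_(rB, n)) chi (psi : state F n) y :
    nontrivial_additive_char chi ->
    (forall w : 'rV[F]_n, (w <= HB)%MS -> Zop chi w psi = psi) ->
  HB *m y^T != 0 -> psi y = 0.
Proof.
move=> [_ [a chi_a]] Zfix; apply: contraNeq => psi_y.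
apply/eqP/matrixP => k j; rewrite ord1 [RHS]mxE.
apply: contraTeq psi_y; rewrite negbK => c_neq0.
set c := (HB *m y^T) k 0 in c_neq0.
(* [Z^w] with [w = (a / c) *: row k HB] multiplies [psi y] by [chi a != 1]. *)
have w_stab : ((a / c) *: row k HB <= HB)%MS by rewrite scalemx_sub ?row_sub.
have := congr1 (fun phi : state F n => phi y) (Zfix _ w_stab).
rewrite ffunE -scalemxAl -row_mul mxE [X in chi (_ * X)]mxE -/c mulfVK // => fixed.
have : (chi a - 1) * psi y == 0 by rewrite mulrBl fixed mul1r subrr.
by rewrite mulf_eq0 subr_eq0 (negbTE chi_a).
Qed.

Lemma css_distance_Z_stabilizer rA rB (HA : 'M[F]_(rA, n)) (HB : 'M[F]_(rB, n)) d b :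
  css_distance_ge HA HB d -> HA *m b^T = 0 -> (pauli_weight 0%R b < d)%N ->
  (b <= HB)%MS.
Proof.
move=> dist HAb; apply: contraTT => b_notin_HB; rewrite -leqNgt.
apply: dist => //; first by rewrite trmx0 mulmx0.
by case=> _; apply/negP.
Qed.

Lemma pauli_weight_delta_diff (i j : 'I_n) :
  (pauli_weight 0%R (delta_mx 0 i - delta_mx 0 j : 'rV[F]_n)%R <= 2)%N.
Proof.
apply: leq_trans (_ : #|[set i; j]| <= 2)%N; last by rewrite cards2; case: (i != j).
apply/subset_leq_card/subsetP => k; rewrite !inE !mxE /=.
by case: (k == i); case: (k == j); rewrite ?subrr ?eqxx ?orbT.
Qed.

Lemma perm_mx_fixed_col m (H : 'M[F]_(m, n)) tau (i : 'I_n) :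
  H *m perm_mx tau = H -> col (tau i) H = col i H.
Proof.
move=> fixH; apply/colP => r.
by rewrite -{1}fixH -(invgK tau) -col_permE !mxE invgK permK.
Qed.

Lemma col_perm_fixed_ker rA rB (HA : 'M[F]_(rA, n)) (HB : 'M[F]_(rB, n)) tau y :
    css_distance_ge HA HB 3 -> HA *m perm_mx tau = HA ->
  HB *m y^T = 0 -> col_perm tau y = y.
Proof.
move=> dist fixHA HBy; apply/rowP => i; rewrite mxE.
pose b : 'rV[F]_n := delta_mx 0 (tau i) - delta_mx 0 i.
have b_stab : (b <= HB)%MS.
  apply: (css_distance_Z_stabilizer dist); last first.
    exact: leq_ltn_trans (pauli_weight_delta_diff _ _) _.
  by rewrite linearB /= !trmx_delta mulmxBr -!colE perm_mx_fixed_col ?subrr.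
have [v def_b] := submxP b_stab.
have : b *m y^T = 0 by rewrite def_b -mulmxA HBy mulmx0.
move/(congr1 (fun M : 'M[F]_1 => M 0 0)); rewrite mulmxBl -!rowE !mxE.
by move/eqP; rewrite subr_eq0 => /eqP.
Qed.

Lemma perm_aut_ker r (H : 'M[F]_(r, n)) tau y :
  is_perm_aut H tau -> (H *m (col_perm tau y)^T == 0) = (H *m y^T == 0).
Proof.
move=> [U [U_unit UH]].
rewrite col_permE trmx_mul tr_perm_mx invgK mulmxA -UH -mulmxA.
apply/eqP/eqP => [|->]; last by rewrite mulmx0.
by move/(congr1 (mulmx (invmx U))); rewrite mulKmx // mulmx0.
Qed.

End CSSPermutation.

Theorem corollary3 (F : finFieldType) (n rA rB : nat)
    (HA : 'M[F]_(rA, n)) (HB : 'M[F]_(rB, n)) (chi : F -> algC) (tau : 'S_n) :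
  row_free HA -> row_free HB -> HA *m HB^T = 0 ->
  nontrivial_additive_char chi ->
  css_distance_ge HA HB 3 ->
  is_perm_aut HA tau -> is_perm_aut HB tau ->
  HA *m perm_mx tau = HA ->
  forall psi : state F n, in_css_codespace chi HA HB psi ->
    qudit_perm tau psi = psi.
Proof.
move=> _ _ _ chi_nt dist _ autHB fixHA psi [_ Zfix].
apply/ffunP => y; rewrite ffunE.
have -> : \row_i y 0 (tau i) = col_perm tau y by apply/rowP => i; rewrite !mxE.
have [HBy | HBy_neq0] := eqVneq (HB *m y^T) 0.
  by rewrite (col_perm_fixed_ker dist fixHA HBy).
have psi_eq0 := Zfixed_state_eq0 chi_nt Zfix.
by rewrite !psi_eq0 ?perm_aut_ker.
Qed.
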